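(* Let $H$ be a real Hilbert space, let $D\subseteq H$ be a nonempty closed convex set, and let $T_1,\dots,T_m:D\to D$ be firmly nonexpansive operators with $F:=\bigcap_{i=1}^m\mathrm{Fix}(T_i)\neq\emptyset$. Fix $(\Omega,w)\in\mathcal{M}$, let $(\lambda_k)_{k\in\mathbb{N}}$ be a steering sequence, and let $u,x^0\in D$. Then the sequence defined by $$x^{k+1}=\lambda_k u+(1-\lambda_k)\sum_{t\in\Omega}w(t)T[t](x^k),\quad k\ge 0,$$ converges strongly to $P_F(u)$.
   Context: An operator $T:D\to H$ is firmly nonexpansive if $\|T(x)-T(y)\|^2\le\langle x-y,T(x)-T(y)\rangle$ for all $x,y\in D$. $\mathrm{Fix}(T)=\{x\in D: T(x)=x\}$; $P_F$ is the metric (nearest point) projection onto the closed convex set $F$. An index vector is a finite tuple $t=(t_1,\dots,t_q)$ with each $t_\ell\in\{1,\dots,m\}$; the string operator is $T[t]:=T_{t_q}T_{t_{q-1}}\cdots T_{t_1}$. A finite set $\Omega$ of index vectors is fit if every $i\in\{1,\dots,m\}$ appears as a component of some $t\in\Omega$. $\mathcal{M}$ denotes the collection of all pairs $(\Omega,w)$ where $\Omega$ is a fit finite set of index vectors and $w:\Omega\to(0,1]$ satisfies $\sum_{t\in\Omega}w(t)=1$. A steering sequence is a real sequence $(\lambda_k)_{k\in\mathbb{N}}$ with $\lambda_k\in[0,1]$ for all $k$, $\lim_{k\to\infty}\lambda_k=0$, $\sum_{k=0}^\infty\lambda_k=+\infty$, and $\sum_{k=0}^\infty|\lambda_{k+1}-\lambda_k|<\infty$.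 $\mathbb{N}$ includes $0$. *)

From HB Require Import structures.
From mathcomp Require Import all_boot all_order all_algebra.
From mathcomp Require Import all_classical all_reals all_analysis.
Set Implicit Arguments. Unset Strict Implicit. Unset Printing Implicit Defensive.
Import Order.TTheory GRing.Theory Num.Theory.
Import numFieldNormedType.Exports.
Local Open Scope classical_set_scope.
Local Open Scope ring_scope.

(* [inner] is a real inner product on V inducing the norm of V. Together with
   completeness of V (completeNormedModType) this makes V a real Hilbert space. *)
Definition is_inner_product (R : realType) (V : normedModType R)
  (inner : V -> V -> R) : Prop :=
  [/\ (forall x y, inner x y = inner y x),
      (forall (a : R) x y z, inner (a *: x + y) z = a * inner x z + inner y z)
    & (forall x, inner x x = `|x| ^+ 2)].

Definition convex_subset (R : realType) (V : normedModType R) (D : set V) : Prop :=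
  forall x y (t : R), D x -> D y -> 0 <= t <= 1 -> D (t *: x + (1 - t) *: y).

Definition firmly_nonexpansive (R : realType) (V : normedModType R)
  (inner : V -> V -> R) (D : set V) (T : V -> V) : Prop :=
  forall x y, D x -> D y -> `|T x - T y| ^+ 2 <= inner (x - y) (T x - T y).

Definition Fix (V : Type) (D : set V) (T : V -> V) : set V :=
  [set x | D x /\ T x = x].

Definition metric_proj (R : realType) (V : normedModType R)
  (F : set V) (u p : V) : Prop :=
  F p /\ forall y, F y -> `|u - p| <= `|u - y|.

(* string operator T[t] = T_{t_q} \o ... \o T_{t_1}, t = [:: t_1; ...; t_q] *)
Definition string_op (V : Type) (m : nat) (T : 'I_m -> V -> V)
  (t : seq 'I_m) (x : V) : V :=
  foldl (fun y i => T i y) x t.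

(* (Omega, w) in M: Omega a finite (duplicate-free) set of nonempty index
   vectors, fit, and w : Omega -> (0,1] summing to 1 *)
Definition in_M (R : realType) (m : nat) (Omega : seq (seq 'I_m))
  (w : seq 'I_m -> R) : Prop :=
  [/\ uniq Omega,
      (forall t, t \in Omega -> t != [::]),
      (forall i : 'I_m, exists2 t, t \in Omega & i \in t),
      (forall t, t \in Omega -> 0 < w t <= 1)
    & \sum_(t <- Omega) w t = 1].

Definition steering (R : realType) (lam : nat -> R) : Prop :=
  [/\ (forall k, 0 <= lam k <= 1),
      lam @ \oo --> (0 : R),
      series lam @ \oo --> +oo
    & cvg (series (fun k => `|lam k.+1 - lam k|) @ \oo)].

From HB Require Import structures.
From mathcomp Require Import all_boot all_order all_algebra.
From mathcomp Require Import all_classical all_reals all_analysis.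
From mathcomp Require Import ring lra.
Set Implicit Arguments. Unset Strict Implicit. Unset Printing Implicit Defensive.
Import Order.TTheory GRing.Theory Num.Theory.
Import numFieldNormedType.Exports.
Local Open Scope classical_set_scope.
Local Open Scope ring_scope.

(* Write S := sum_(t in Omega) w(t) T[t] for the averaged string operator, so that
   the iteration reads x_(k+1) = l_k u + (1 - l_k) S x_k.  The proof has three parts.

   Firmly nonexpansive maps are nonexpansive and lose
      |x - T x|^2 towards any fixed point; hence each string T[t] is nonexpansive and
      quasi-nonexpansive, strictly unless x is fixed by every operator of t.  By
      convexity of the squared norm and fitness of Omega, S is a nonexpansive
      self-map of D whose fixed-point set is F = inter_i Fix(T_i).
   2. Halpern's theorem.  For a nonexpansive self-map S of a closed convex subset D
      of a Hilbert space with a fixed point, Browder's path z_t = t u + (1 - t) S z_t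
      (obtained from Banach's fixed point theorem) converges as t -> 0 to a fixed
      point z of S with <u - z, z - q> >= 0 for all fixed points q, and the Halpern
      iterates converge to z whenever (l_k) is a steering sequence.  Both
      convergence statements for the iterates follow from Xu's lemma on real
      sequences a_(k+1) <= (1 - l_k) a_k + l_k b_k + c_k.
   3. The variational inequality characterizes z as the metric projection P_F(u). *)

Lemma norm_sq_le0 (R : realType) (V : normedModType R) (v : V) :
  `|v| ^+ 2 <= 0 -> v = 0.
Proof. by move=> h; apply/eqP; rewrite -normr_eq0 -sqrf_eq0 eq_le h sqr_ge0. Qed.

Lemma convex_combination (R : realType) (V : normedModType R) (D : set V)
    (I : eqType) (s : seq I) (c : I -> R) (y : I -> V) :
  convex_subset D -> s != [::] ->
  (forall i, i \in s -> 0 < c i) -> (forall i, i \in s -> D (y i)) ->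
  D ((\sum_(i <- s) c i)^-1 *: \sum_(i <- s) c i *: y i).
Proof.
move=> cD; elim: s => [//|a s IH] _ c_gt0 Dy.
have ca := c_gt0 a (mem_head a s); have Dya := Dy a (mem_head a s).
have [-> | s_nil] := eqVneq s [::].
  by rewrite !big_seq1 scalerA mulVf ?gt_eqF // scale1r.
have sub i : i \in s -> i \in a :: s by rewrite inE => ->; rewrite orbT.
have := IH s_nil (fun i si => c_gt0 i (sub i si)) (fun i si => Dy i (sub i si)).
set W := \sum_(i <- s) c i; set Y := \sum_(i <- s) _ => DW.
have W_gt0 : 0 < W.
  have c_ge0 i : i \in s -> 0 <= c i by move=> si; rewrite ltW ?c_gt0 ?sub.
  have [b sb] : exists b, b \in s.
    by case: (s) s_nil => [//|b s'] _; exists b; rewrite mem_head.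
  rewrite /W big_seq lt_def (psumr_eq0 _ c_ge0) (sumr_ge0 _ c_ge0) andbT.
  by apply/allPn; exists b => //; rewrite sb gt_eqF ?c_gt0 ?sub.
rewrite !big_cons -/W -/Y.
have t01 : 0 <= c a / (c a + W) <= 1.
  by rewrite divr_ge0 ?ler_pdivrMr /=; lra.
have := cD _ _ _ Dya DW t01.
have -> : 1 - c a / (c a + W) = W / (c a + W) by field; lra.
by rewrite scalerA mulrAC divff ?gt_eqF // mul1r scalerDr scalerA mulrC.
Qed.

Section InnerProduct.
Variables (R : realType) (V : normedModType R) (inner : V -> V -> R).
Hypothesis ip : is_inner_product inner.
Local Notation "<< x , y >>" := (inner x y).

Lemma innerC x y : <<x, y>> = <<y, x>>.
Proof. by case: ip. Qed.

Lemma inner_linear a x y z : <<a *: x + y, z>> = a * <<x, z>> + <<y, z>>.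
Proof. by case: ip. Qed.

Lemma inner_norm x : <<x, x>> = `|x| ^+ 2.
Proof. by case: ip. Qed.

Lemma inner0l z : <<0, z>> = 0.
Proof. by have := inner_linear 1 0 0 z; rewrite scaler0 addr0 mul1r => h; lra. Qed.

Lemma innerDl x y z : <<x + y, z>> = <<x, z>> + <<y, z>>.
Proof. by have := inner_linear 1 x y z; rewrite scale1r mul1r. Qed.

Lemma innerZl a x z : <<a *: x, z>> = a * <<x, z>>.
Proof. by have := inner_linear a x 0 z; rewrite addr0 inner0l addr0. Qed.

Lemma innerNl x z : <<- x, z>> = - <<x, z>>.
Proof. by rewrite -scaleN1r innerZl mulN1r. Qed.

Lemma innerDr x y z : <<z, x + y>> = <<z, x>> + <<z, y>>.
Proof. by rewrite innerC innerDl !(innerC z). Qed.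

Lemma innerZr a x z : <<z, a *: x>> = a * <<z, x>>.
Proof. by rewrite innerC innerZl innerC. Qed.

Lemma innerNr x z : <<z, - x>> = - <<z, x>>.
Proof. by rewrite innerC innerNl innerC. Qed.

Lemma inner_suml (I : Type) (s : seq I) (f : I -> V) z :
  <<\sum_(i <- s) f i, z>> = \sum_(i <- s) <<f i, z>>.
Proof.
elim: s => [|i s IH]; first by rewrite !big_nil inner0l.
by rewrite !big_cons innerDl IH.
Qed.

Lemma normD_sq x y : `|x + y| ^+ 2 = `|x| ^+ 2 + 2 * <<x, y>> + `|y| ^+ 2.
Proof. by rewrite -!inner_norm innerDl !innerDr (innerC y x); ring. Qed.

Lemma normB_sq x y : `|x - y| ^+ 2 = `|x| ^+ 2 - 2 * <<x, y>> + `|y| ^+ 2.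
Proof. by rewrite normD_sq innerNr normrN; ring. Qed.

Lemma cauchy_schwarz x y : <<x, y>> <= `|x| * `|y|.
Proof.
have [-> | x_neq0] := eqVneq x 0; first by rewrite inner0l normr0 mul0r.
have [-> | y_neq0] := eqVneq y 0; first by rewrite innerC inner0l normr0 mulr0.
have h := sqr_ge0 `| (`|y| *: x - `|x| *: y) |.
rewrite normB_sq !normrZ innerZl innerZr !normr_id in h.
have xy_gt0 : 0 < `|x| * `|y| by rewrite mulr_gt0 ?normr_gt0.
by rewrite -subr_ge0 -(pmulr_rge0 _ xy_gt0); nra.
Qed.

Lemma normD_sq_le a b : `|a + b| ^+ 2 <= `|a| ^+ 2 + 2 * <<b, a + b>>.
Proof. by rewrite normD_sq innerDr inner_norm innerC; have := sqr_ge0 `|b|; lra. Qed.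

Lemma norm_sq_addr_ge a b : 0 <= <<a, b>> -> `|a| ^+ 2 + `|b| ^+ 2 <= `|a + b| ^+ 2.
Proof. by move=> ab; rewrite normD_sq; lra. Qed.

Lemma norm_sq_convex (I : eqType) (s : seq I) (c : I -> R) (a : I -> V) :
  (forall i, i \in s -> 0 <= c i) -> \sum_(i <- s) c i = 1 ->
  `|\sum_(i <- s) c i *: a i| ^+ 2 <= \sum_(i <- s) c i * `|a i| ^+ 2.
Proof.
move=> c_ge0 c_sum; set b := \sum_(i <- s) c i *: a i.
have spread : 0 <= \sum_(i <- s) c i * `|a i - b| ^+ 2.
  by rewrite big_seq sumr_ge0 // => i /c_ge0 ?; rewrite mulr_ge0 ?sqr_ge0.
have E i : c i * `|a i - b| ^+ 2 =
    c i * `|a i| ^+ 2 - 2 * <<c i *: a i, b>> + c i * `|b| ^+ 2.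
  by rewrite normB_sq innerZl; ring.
rewrite (eq_bigr _ (fun i _ => E i)) big_split sumrB /= in spread.
by rewrite -mulr_suml -mulr_sumr -inner_suml c_sum inner_norm in spread; lra.
Qed.

Lemma inner_shift u y z w :
  <<u - z, y - z>> <= <<u - w, y - w>> + `|z - w| * (`|y - z| + `|u - w|).
Proof.
have eu : u - z = (u - w) + (w - z) by rewrite addrA subrK.
have ey : y - z = (y - w) + (w - z) by rewrite addrA subrK.
rewrite {1}eu innerDl {1}ey innerDr.
have := cauchy_schwarz (w - z) (y - z); have := cauchy_schwarz (u - w) (w - z).
by rewrite (distrC w z); lra.
Qed.

Lemma variational_metric_proj (F : set V) (u z : V) :
  F z -> (forall q, F q -> 0 <= <<u - z, z - q>>) ->
  metric_proj F u z /\ (forall p, metric_proj F u p -> p = z).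
Proof.
move=> Fz var.
have pyth q : F q -> `|u - z| ^+ 2 + `|z - q| ^+ 2 <= `|u - q| ^+ 2.
  by move=> /var/norm_sq_addr_ge; rewrite addrA subrK.
split.
  split=> // q /pyth h; rewrite -ler_sqr ?nnegrE //; have := sqr_ge0 `|z - q|; lra.
move=> p [Fp /(_ z Fz)]; rewrite -ler_sqr ?nnegrE // => pz.
have := pyth p Fp => h; apply/esym/subr0_eq/norm_sq_le0; lra.
Qed.
End InnerProduct.

Section StringOperators.
Variables (R : realType) (V : normedModType R) (inner : V -> V -> R)
  (D : set V) (m : nat) (T : 'I_m -> V -> V).
Hypothesis ip : is_inner_product inner.
Hypothesis T_in : forall i y, D y -> D (T i y).
Hypothesis T_fne : forall i, firmly_nonexpansive inner D (T i).

(* Firmly nonexpansive maps are nonexpansive (by Cauchy-Schwarz). *)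
Lemma fne_nonexpansive i x y : D x -> D y -> `|T i x - T i y| <= `|x - y|.
Proof.
move=> Dx Dy; have := T_fne i Dx Dy; have := cauchy_schwarz ip (x - y) (T i x - T i y).
by have := normr_ge0 (T i x - T i y); have := normr_ge0 (x - y); nra.
Qed.

Lemma fne_fixed_gap i x p : D x -> D p -> T i p = p ->
  `|T i x - p| ^+ 2 + `|x - T i x| ^+ 2 <= `|x - p| ^+ 2.
Proof.
move=> Dx Dp Tp; have := T_fne i Dx Dp; rewrite Tp => h.
have -> : x - T i x = (x - p) - (T i x - p) by rewrite opprB addrA subrK.
by rewrite (normB_sq ip (x - p)); lra.
Qed.

Lemma string_op_cons i t x : string_op T (i :: t) x = string_op T t (T i x).
Proof. by []. Qed.

Lemma string_op_in t x : D x -> D (string_op T t x).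
Proof. by elim: t x => [|i t IH] x Dx //; rewrite string_op_cons; apply: IH; apply: T_in. Qed.

Lemma string_op_nonexpansive t x y : D x -> D y ->
  `|string_op T t x - string_op T t y| <= `|x - y|.
Proof.
elim: t x y => [|i t IH] x y Dx Dy //; rewrite !string_op_cons.
exact: le_trans (IH _ _ (T_in i Dx) (T_in i Dy)) (fne_nonexpansive i Dx Dy).
Qed.

Lemma string_op_fixed p t : (forall i, T i p = p) -> string_op T t p = p.
Proof. by move=> Tp; elim: t => [|i t IH] //; rewrite string_op_cons Tp. Qed.

Section CommonFixedPoint.
Variable p : V.
Hypotheses (Dp : D p) (Tp : forall i, T i p = p).

Lemma string_op_quasi t x : D x ->
  `|string_op T t x - p| ^+ 2 <= `|x - p| ^+ 2.
Proof.
elim: t x => [|i t IH] x Dx //; rewrite string_op_cons.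
have := fne_fixed_gap Dx Dp (Tp i); have := IH _ (T_in i Dx).
by have := sqr_ge0 `|x - T i x|; lra.
Qed.

Lemma string_op_strict t x : D x ->
  `|x - p| ^+ 2 <= `|string_op T t x - p| ^+ 2 -> forall i, i \in t -> T i x = x.
Proof.
elim: t x => [|i t IH] x Dx //; rewrite string_op_cons => no_gain j.
have Tix : T i x = x.
  have := fne_fixed_gap Dx Dp (Tp i); have := string_op_quasi t (T_in i Dx).
  by move=> h1 h2; apply/esym/subr0_eq/norm_sq_le0; lra.
rewrite inE => /orP[/eqP -> // | jt].
by rewrite Tix in no_gain; exact: IH.
Qed.
End CommonFixedPoint.
End StringOperators.

Section AveragedOperator.
Variables (R : realType) (V : normedModType R) (inner : V -> V -> R)
  (D : set V) (m : nat) (T : 'I_m -> V -> V)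
  (Omega : seq (seq 'I_m)) (w : seq 'I_m -> R).
Hypothesis ip : is_inner_product inner.
Hypothesis convexD : convex_subset D.
Hypothesis T_in : forall i y, D y -> D (T i y).
Hypothesis T_fne : forall i, firmly_nonexpansive inner D (T i).
Hypothesis Omega_w : in_M Omega w.

Definition averaged_op (x : V) : V := \sum_(t <- Omega) w t *: string_op T t x.

Local Notation F := (\bigcap_(i in [set: 'I_m]) Fix D (T i)).

Lemma weight_gt0 t : t \in Omega -> 0 < w t.
Proof. by case: Omega_w => _ _ _ h _ /h /andP[]. Qed.

Lemma weight_sum : \sum_(t <- Omega) w t = 1.
Proof. by case: Omega_w. Qed.

Lemma Omega_neq_nil : Omega != [::].
Proof.
by apply/eqP => O_nil; have := weight_sum; rewrite O_nil big_nil => /esym/eqP; rewrite oner_eq0.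
Qed.

Lemma averaged_in x : D x -> D (averaged_op x).
Proof.
move=> Dx; have := convex_combination convexD Omega_neq_nil weight_gt0
  (fun t _ => string_op_in T_in t Dx).
by rewrite weight_sum invr1 scale1r.
Qed.

Lemma averaged_nonexpansive x y : D x -> D y ->
  `|averaged_op x - averaged_op y| <= `|x - y|.
Proof.
move=> Dx Dy; rewrite /averaged_op -sumrB.
apply: le_trans (ler_norm_sum _ _ _) _.
rewrite -[leRHS]mul1r -weight_sum mulr_suml !big_seq ler_sum // => t tO.
rewrite -scalerBr normrZ gtr0_norm ?weight_gt0 // ler_pM2l ?weight_gt0 //.
exact: (string_op_nonexpansive ip T_in T_fne).
Qed.

Lemma averaged_fixed p : (forall i, T i p = p) -> averaged_op p = p.
Proof.
move=> Tp; rewrite /averaged_op (eq_bigr (fun t => w t *: p)).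
  by rewrite -scaler_suml weight_sum scale1r.
by move=> t _; rewrite string_op_fixed.
Qed.

(* A fixed point z of S is a common fixed point of all T i, provided some
   common fixed point p exists: by convexity of the squared norm, every string
   must map z exactly as far from p as z itself, and Omega is fit. *)
Lemma averaged_fixed_common z p : D z -> averaged_op z = z ->
  D p -> (forall i, T i p = p) -> forall i, T i z = z.
Proof.
move=> Dz Sz Dp Tp i.
pose gap t := w t * (`|z - p| ^+ 2 - `|string_op T t z - p| ^+ 2).
have gap_ge0 t : t \in Omega -> 0 <= gap t.
  move=> tO; rewrite mulr_ge0 ?subr_ge0 ?(ltW (weight_gt0 tO)) //.
  exact: (string_op_quasi ip T_in T_fne).
have zp : z - p = \sum_(t <- Omega) w t *: (string_op T t z - p).
  rewrite (eq_bigr (fun t => w t *: string_op T t z - w t *: p)) => [|t _];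
    last by rewrite scalerBr.
  by rewrite sumrB -scaler_suml weight_sum scale1r -{1}Sz.
have gap_sum : \sum_(t <- Omega) gap t <= 0.
  have := norm_sq_convex ip (fun t => string_op T t z - p)
    (fun t tO => ltW (weight_gt0 tO)) weight_sum; rewrite -zp.
  have -> : \sum_(t <- Omega) gap t =
      `|z - p| ^+ 2 - \sum_(t <- Omega) w t * `|string_op T t z - p| ^+ 2.
    rewrite -{1}[`|z - p| ^+ 2]mul1r -weight_sum mulr_suml -sumrB.
    by apply: eq_bigr => t _; rewrite /gap; ring.
  lra.
have gap0 : \sum_(t <- Omega) gap t = 0.
  by apply/le_anti; rewrite gap_sum big_seq sumr_ge0.
have [_ _ fit _ _] := Omega_w; have [t tO it] := fit i.
have gap_t : gap t = 0.
  move: gap0; rewrite big_seq => /eqP; rewrite (psumr_eq0 _ gap_ge0).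
  by move=> /allP /(_ t tO); rewrite tO => /eqP.
apply: (string_op_strict ip T_in T_fne Dp Tp Dz _ it).
by move: gap_t => /eqP; rewrite mulf_eq0 gt_eqF ?weight_gt0 //= subr_eq0 => /eqP ->.
Qed.

(* F is the set of points of D fixed by every T i (Omega is nonempty and made of
   nonempty strings, so some index exists). *)
Lemma common_fixE y : F y <-> D y /\ (forall i, T i y = y).
Proof.
split=> [Fy | [Dy Ty] i _]; last by split.
split=> [|i]; last by have [] := Fy i Logic.I.
have [_ t_neq_nil _ _ _] := Omega_w.
case: Omega Omega_neq_nil t_neq_nil => [//|t O] _ /(_ t (mem_head t O)).
by case: t => [//|i _] _; have [] := Fy i Logic.I.
Qed.

Lemma averaged_fixE p y : F p -> F y <-> D y /\ averaged_op y = y.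
Proof.
move=> /common_fixE [Dp Tp]; rewrite common_fixE.
split=> [[Dy /averaged_fixed] // | [Dy Sy]]; split=> //.
exact: averaged_fixed_common Dy Sy Dp Tp.
Qed.
End AveragedOperator.

(* Real sequences.  [limsup_nonpos f] says that f is eventually below every
   positive bound, i.e. limsup f <= 0; this is the currency of the convergence
   arguments below. *)
Section RealSequences.
Variable R : realType.

Definition limsup_nonpos (f : nat -> R) : Prop :=
  forall e, 0 < e -> exists N, forall k, (N <= k)%N -> f k <= e.

Lemma near_infty (P : nat -> Prop) :
  (\forall n \near \oo, P n) <-> exists N, forall n, (N <= n)%N -> P n.
Proof.
split; first by case=> N _ HN; exists N => n Nn; apply: HN.
by case=> N HN; exists N => // n /= Nn; apply: HN.
Qed.

Lemma limsup_nonpos_le (f g : nat -> R) :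
  (forall k, f k <= g k) -> limsup_nonpos g -> limsup_nonpos f.
Proof.
move=> fg hg e /hg [N HN]; exists N => k /HN; exact: le_trans (fg k).
Qed.

Lemma limsup_nonposD (f g : nat -> R) :
  limsup_nonpos f -> limsup_nonpos g -> limsup_nonpos (fun k => f k + g k).
Proof.
move=> hf hg e e0; have e2 : 0 < e / 2 by rewrite divr_gt0.
have [[N1 HN1] [N2 HN2]] := (hf _ e2, hg _ e2).
exists (maxn N1 N2) => k; rewrite geq_max => /andP[/HN1 h1 /HN2 h2]; lra.
Qed.

Lemma limsup_nonposZ (K : R) (f : nat -> R) :
  0 <= K -> limsup_nonpos f -> limsup_nonpos (fun k => K * f k).
Proof.
move=> K0 hf e e0; have K1 : 0 < K + 1 by lra.
have [N HN] := hf _ (divr_gt0 e0 K1); exists N => k /HN fk.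
have : K * f k <= K * (e / (K + 1)) by rewrite ler_wpM2l.
have : K * (e / (K + 1)) <= e by rewrite mulrA ler_pdivrMr //; nra.
lra.
Qed.

Lemma limsup_nonposS (f : nat -> R) :
  limsup_nonpos f -> limsup_nonpos (fun k => f k.+1).
Proof. by move=> hf e /hf [N HN]; exists N => k Nk; apply/HN/leqW. Qed.

Lemma limsup_nonpos_sqr (f : nat -> R) :
  (forall k, 0 <= f k) -> limsup_nonpos (fun k => f k ^+ 2) -> limsup_nonpos f.
Proof.
move=> f0 hf e e0; have [N HN] := hf _ (exprn_gt0 2 e0).
by exists N => k /HN; rewrite ler_sqr ?nnegrE ?f0 // ltW.
Qed.

Lemma limsup_nonpos_const (c : R) : limsup_nonpos (fun=> c) -> c <= 0.
Proof.
by move=> hc; apply/ler_addgt0Pr => e /hc [N /(_ N (leqnn N))]; rewrite add0r.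
Qed.

Lemma cvg0_limsup_nonpos (f : nat -> R) : f @ \oo --> 0 -> limsup_nonpos f.
Proof.
move=> /cvgrPdist_le hf e /hf /near_infty [N HN]; exists N => k /HN.
by rewrite sub0r normrN; apply: le_trans; exact: ler_norm.
Qed.

Lemma limsup_nonpos_inv : limsup_nonpos (fun n => n.+1%:R^-1).
Proof.
move=> e e0; exists (Num.Def.archi_bound e^-1) => n Nn.
have e_inv : 0 <= e^-1 by rewrite invr_ge0 ltW.
have := archi_boundP e_inv; rewrite -(ler_nat R) in Nn.
by rewrite invf_ple ?posrE ?ltr0n // -natr1; lra.
Qed.

Lemma series_tail (f : nat -> R) N k : (N <= k)%N ->
  \sum_(N <= j < k) f j = series f k - series f N.
Proof. by move=> Nk; rewrite sub_series Nk. Qed.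

Lemma series_tail_small (f : nat -> R) : cvgn (series f) ->
  forall e, 0 < e -> exists N, forall n k, (N <= n)%N -> \sum_(n <= j < k) f j <= e.
Proof.
move=> /cvgrPdist_le hc e e0; have e2 : 0 < e / 2 by rewrite divr_gt0.
have /near_infty [N HN] := hc _ e2; exists N => n k Nn.
have [nk | kn] := leqP n k; last by rewrite big_geq ?(ltW e0) // ltnW.
rewrite series_tail //; have := HN n Nn; have := HN k (leq_trans Nn nk).
set l := limn _; rewrite !ler_norml; lra.
Qed.

Lemma series_tail_large (f : nat -> R) : series f @ \oo --> +oo ->
  forall N M, exists K, forall k, (K <= k)%N -> M <= \sum_(N <= j < k) f j.
Proof.
move=> /cvgryPge hf N M.
have /near_infty [K HK] := hf (M + series f N).
exists (maxn K N) => k; rewrite geq_max => /andP[/HK hk Nk].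
by rewrite series_tail //; lra.
Qed.

Lemma series_shift_pinfty (f : nat -> R) :
  series f @ \oo --> +oo -> series (fun k => f k.+1) @ \oo --> +oo.
Proof.
move=> hf; apply/cvgryPge => M; apply/near_infty.
have [K HK] := series_tail_large hf 1 M; exists K => k Kk.
by have := HK k.+1 (leqW Kk); rewrite big_add1 /series /= big_mkord.
Qed.

Lemma contraction_sum_bound (A l : nat -> R) (N : nat) (B : R) :
  (forall k, 0 <= l k <= 1) ->
  (forall k, (N <= k)%N -> A k.+1 <= (1 - l k) * A k) ->
  A N <= B -> 0 <= B ->
  forall i, A (N + i)%N * (1 + \sum_(N <= j < N + i) l j) <= B.
Proof.
move=> l01 contr AB B0; elim=> [|i IH]; first by rewrite addn0 big_geq // addr0 mulr1.
rewrite addnS big_nat_recr ?leq_addr //=.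
set k := (N + i)%N in IH *; set L := \sum_(N <= j < k) l j in IH *.
have [l0 l1] := andP (l01 k); have L0 : 0 <= L by rewrite sumr_ge0 // => j _; case/andP: (l01 j).
have Ak := contr k (leq_addr _ _).
have [Ak1_le0 | Ak1_gt0] := lerP (A k.+1) 0.
  by apply: le_trans B0; rewrite mulr_le0_ge0 //; lra.
have Ak_gt0 : 0 < A k by nra.
have : (1 - l k) * (1 + (L + l k)) <= 1 + L by nra.
nra.
Qed.

Lemma xu_lemma (a b c l : nat -> R) :
  (forall k, 0 <= a k) -> (forall k, 0 <= l k <= 1) -> (forall k, 0 <= c k) ->
  (forall k, a k.+1 <= (1 - l k) * a k + l k * b k + c k) ->
  limsup_nonpos b -> cvgn (series c) -> series l @ \oo --> +oo ->
  limsup_nonpos a.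
Proof.
move=> a0 l01 c0 rec hb hc hl e e0; have e3 : 0 < e / 3 by rewrite divr_gt0.
have [[N1 HN1] [N2 HN2]] := (hb _ e3, series_tail_small hc e3).
pose N := maxn N1 N2; pose C k := \sum_(N <= j < k) c j.
pose A k := a k - e / 3 - C k.
have contr k : (N <= k)%N -> A k.+1 <= (1 - l k) * A k.
  move=> Nk; have [l0 l1] := andP (l01 k); have bk := HN1 k (leq_trans (leq_maxl _ _) Nk).
  have C0 : 0 <= C k by rewrite sumr_ge0.
  have : l k * b k <= l k * (e / 3) by rewrite ler_wpM2l.
  have eC : C k.+1 = C k + c k by rewrite /C big_nat_recr.
  by have := rec k; rewrite /A eC; nra.
have AN : A N <= a N by rewrite /A /C big_geq // subr0; lra.
have bound := contraction_sum_bound l01 contr AN (a0 N).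
have [K HK] := series_tail_large hl N (3 * a N / e).
exists (maxn K N) => k; rewrite geq_max => /andP[/HK Lk Nk].
have := bound (k - N)%N; rewrite subnKC // => Ak.
have Ck : C k <= e / 3 by apply: HN2; rewrite leq_maxr.
have aNL : a N <= e / 3 * \sum_(N <= j < k) l j.
  by move: Lk; rewrite ler_pdivrMr // => h; lra.
have L0 : 0 <= \sum_(N <= j < k) l j by rewrite sumr_ge0 // => j _; case/andP: (l01 j).
have : A k <= e / 3.
  by rewrite -(ler_pM2r (_ : 0 < 1 + \sum_(N <= j < k) l j)); lra.
by rewrite /A; lra.
Qed.
End RealSequences.

Lemma cvg_limsup_dist (R : realType) (V : normedModType R) (f : nat -> V) (y : V) :
  f @ \oo --> y <-> limsup_nonpos (fun k => `|y - f k|).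
Proof. by rewrite cvgrPdist_le; split=> h e e0; apply/near_infty/h. Qed.

Lemma cauchy_seq_cvg (R : realType) (V : completeNormedModType R) (f : nat -> V) :
  (forall e, 0 < e -> exists N, forall n k, (N <= n)%N -> (N <= k)%N -> `|f n - f k| <= e) ->
  cvgn f.
Proof.
move=> H; apply/cauchy_cvgP/cauchyP => e e0.
have [N HN] := H _ (divr_gt0 e0 (ltr0Sn _ 1)); exists (f N); apply/near_infty.
exists N => n Nn; rewrite -ball_normE /=.
by apply: le_lt_trans (HN _ _ (leqnn N) Nn) _; rewrite ltr_pdivrMr //; lra.
Qed.

Lemma contraction_fixed_point (R : realType) (V : completeNormedModType R)
    (U : set V) (f : V -> V) (q : R) :
  closed U -> U !=set0 -> (forall x, U x -> U (f x)) -> 0 <= q < 1 ->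
  (forall x y, U x -> U y -> `|f x - f y| <= q * `|x - y|) ->
  exists2 p, U p & p = f p.
Proof.
move=> closedU U0 fU /andP[q0 q1] lip.
pose g : {fun U >-> U} := HB.pack f (isFun.Build _ _ U U f fU).
apply: (@banach_fixed_point R V U g) => //.
by exists (NngNum q0); split=> // -[x y] [/= Ux Uy]; exact: lip.
Qed.

Lemma affine_combB (R : pzRingType) (V : lmodType R) (l : R) (a s z : V) :
  l *: a + (1 - l) *: s - z = l *: (a - z) + (1 - l) *: (s - z).
Proof.
rewrite !scalerBr scalerBl scale1r addrACA -opprD; congr (_ + _).
by rewrite addrC -scalerDl subrK scale1r.
Qed.

Lemma affine_comb_diff (R : pzRingType) (V : lmodType R) (a b : R) (w p q : V) :
  (b *: w + (1 - b) *: q) - (a *: w + (1 - a) *: p) =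
  (b - a) *: (w - p) + (1 - b) *: (q - p).
Proof.
rewrite !scalerBr addrACA -opprD -scalerDl.
have -> : b - a + (1 - b) = 1 - a by rewrite addrC addrA subrK.
by rewrite [(b - a) *: w]scalerBl opprD addrA [b *: w + _ - _]addrAC.
Qed.

Section Halpern.
Variables (R : realType) (V : completeNormedModType R) (inner : V -> V -> R)
  (D : set V) (S : V -> V) (u : V).
Hypothesis ip : is_inner_product inner.
Hypothesis convexD : convex_subset D.
Hypothesis closedD : closed D.
Hypothesis S_in : forall x, D x -> D (S x).
Hypothesis S_ne : forall x y, D x -> D y -> `|S x - S y| <= `|x - y|.
Hypothesis Du : D u.
Local Notation "<< x , y >>" := (inner x y).

Lemma nonexpansive_monotone x y : D x -> D y ->
  0 <= <<(x - S x) - (y - S y), x - y>>.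
Proof.
move=> Dx Dy.
have -> : (x - S x) - (y - S y) = (x - y) - (S x - S y).
  by rewrite !opprB addrACA [RHS]addrACA [- y + _]addrC.
rewrite (innerDl ip) (innerNl ip) (inner_norm ip).
have := cauchy_schwarz ip (S x - S y) (x - y).
by have := ler_wpM2r (normr_ge0 (x - y)) (S_ne Dx Dy); rewrite expr2; lra.
Qed.

(* Browder's path: for 0 < t < 1 the map y |-> t u + (1 - t) S y is a
   (1 - t)-contraction of D, hence has a fixed point. *)
Lemma browder_point t : 0 < t < 1 -> exists2 z, D z & z = t *: u + (1 - t) *: S z.
Proof.
move=> /andP[t0 t1].
apply: (@contraction_fixed_point R V D (fun y => t *: u + (1 - t) *: S y) (1 - t)) => //.
- by exists u.
- by move=> y Dy; apply: convexD => //; [exact: S_in | rewrite !ltW].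
- by apply/andP; split; lra.
- move=> x y Dx Dy; rewrite opprD addrACA subrr add0r -scalerBr normrZ ger0_norm; last lra.
  by rewrite ler_wpM2l ?S_ne //; lra.
Qed.

Lemma browder_residual t z : 0 < t < 1 -> z = t *: u + (1 - t) *: S z ->
  z - S z = (t / (1 - t)) *: (u - z).
Proof.
move=> /andP[t0 t1] zE.
have h1 : (1 - t) *: S z = z - t *: u.
  by apply/eqP; rewrite eq_sym subr_eq [_ + t *: u]addrC -zE.
have key : (1 - t) *: (z - S z) = t *: (u - z).
  by rewrite scalerBr h1 scalerBl scale1r scalerBr opprB addrC addrA subrK.
have ne : 1 - t != 0 by rewrite subr_eq0 eq_sym lt_eqF.
by rewrite -[z - S z]scale1r -{1}(mulVf ne) -[LHS]scalerA key !scalerA mulrC.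
Qed.

(* We follow the path along t_n = 1 / (n + 2), for which t_n / (1 - t_n) = 1 / (n + 1). *)
Definition path_param (n : nat) : R := n.+2%:R^-1.

Lemma path_param01 n : 0 < path_param n < 1.
Proof. by rewrite /path_param invr_gt0 ltr0n /= invf_lt1 ?ltr0n // ltr1n. Qed.

Lemma path_param_ratio n : path_param n / (1 - path_param n) = n.+1%:R^-1.
Proof.
rewrite /path_param -!natr1; have : 0 < n%:R + 1 :> R by rewrite ltr_pwDr ?ler0n.
by move=> h; field; rewrite ?gt_eqF //; lra.
Qed.

Section BrowderPath.
Variable p0 : V.
Hypotheses (Dp0 : D p0) (Sp0 : S p0 = p0).
Variable z : nat -> V.
Hypothesis z_path :
  forall n, D (z n) /\ z n = path_param n *: u + (1 - path_param n) *: S (z n).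

Lemma path_in n : D (z n).
Proof. by case: (z_path n). Qed.

Lemma path_residual n : z n - S (z n) = n.+1%:R^-1 *: (u - z n).
Proof.
by rewrite -path_param_ratio; apply: browder_residual; [exact: path_param01 | case: (z_path n)].
Qed.

Lemma path_variational n q : D q -> S q = q -> 0 <= <<u - z n, z n - q>>.
Proof.
move=> Dq Sq; have := nonexpansive_monotone (path_in n) Dq.
by rewrite Sq subrr subr0 path_residual (innerZl ip) pmulr_rge0 // invr_gt0 ltr0n.
Qed.

Lemma path_bounded n q : D q -> S q = q -> `|u - z n| <= `|u - q|.
Proof.
move=> Dq Sq; rewrite -ler_sqr ?nnegrE //.
have := norm_sq_addr_ge ip (path_variational n Dq Sq); rewrite addrA subrK.
by have := sqr_ge0 `|z n - q|; lra.
Qed.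

Lemma path_increment n k : (n <= k)%N ->
  `|z n - z k| ^+ 2 <= `|u - z k| ^+ 2 - `|u - z n| ^+ 2.
Proof.
rewrite leq_eqVlt => /orP[/eqP -> | nk]; first by rewrite subrr normr0 expr2 mulr0 subrr.
have rate_lt : k.+1%:R^-1 < n.+1%:R^-1 :> R.
  by rewrite ltf_pV2 ?posrE ?ltr0n // ltr_nat ltnS.
have rate_gt0 : 0 < k.+1%:R^-1 :> R by rewrite invr_gt0 ltr0n.
have := nonexpansive_monotone (path_in n) (path_in k).
have uzk : u - z k = (u - z n) + (z n - z k) by rewrite addrA subrK.
rewrite !path_residual (innerDl ip) (innerNl ip) !(innerZl ip) uzk (innerDl ip (u - z n)).
rewrite (inner_norm ip (z n - z k)) (normD_sq ip (u - z n)) => mono.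
suff : 0 <= (n.+1%:R^-1 - k.+1%:R^-1) * <<u - z n, z n - z k>>.
  by rewrite pmulr_rge0 ?subr_gt0 //; lra.
have := mulr_ge0 (ltW rate_gt0) (sqr_ge0 `|z n - z k|).
by move: mono; set a := n.+1%:R^-1; set b := k.+1%:R^-1; nra.
Qed.

Lemma path_cvg : cvgn z.
Proof.
pose s n := `|u - z n| ^+ 2.
have s_nd : nondecreasing_seq s.
  move=> n k nk; have := path_increment nk; have := sqr_ge0 `|z n - z k|; rewrite /s; lra.
have s_ub : has_ubound (range s).
  exists (`|u - p0| ^+ 2) => _ [n _ <-]; rewrite /s ler_sqr ?nnegrE //.
  exact: path_bounded.
have /cvg_limsup_dist s_cvg := nondecreasing_cvgn s_nd s_ub.
apply: cauchy_seq_cvg => e e0.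
have [N HN] := s_cvg _ (divr_gt0 (exprn_gt0 2 e0) (ltr0Sn _ 1)).
have near n k : (N <= n)%N -> (n <= k)%N -> `|z n - z k| <= e.
  move=> Nn nk; rewrite -ler_sqr ?nnegrE ?(ltW e0) //.
  have := path_increment nk; have := HN n Nn; have := HN k (leq_trans Nn nk).
  by rewrite /s !ler_norml => /andP[? ?] /andP[? ?]; lra.
exists N => n k Nn Nk; have [nk | kn] := leqP n k; first exact: near.
by rewrite distrC; apply: near => //; exact: ltnW.
Qed.

Definition browder_limit : V := limn z.

Lemma browder_limit_dist : limsup_nonpos (fun n => `|browder_limit - z n|).
Proof. exact/cvg_limsup_dist/path_cvg. Qed.

Lemma browder_limit_in : D browder_limit.
Proof. by apply: (closed_cvg _ closedD _ _ path_cvg); apply: nearW; exact: path_in. Qed.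

(* z = lim z_n is fixed: |z - S z| <= 2 |z - z_n| + |z_n - S z_n| and the
   residuals |z_n - S z_n| = |u - z_n| / (n + 1) vanish. *)
Lemma browder_limit_fixed : S browder_limit = browder_limit.
Proof.
set zl := browder_limit.
have : limsup_nonpos (fun=> `|zl - S zl|).
  apply: (limsup_nonpos_le (g := fun n => 2 * `|zl - z n| + `|u - p0| * n.+1%:R^-1)).
    move=> n; have e1 : zl - S zl = (zl - z n) + (z n - S (z n)) + (S (z n) - S zl).
      by rewrite !addrA !subrK.
    rewrite e1 path_residual.
    have h1 := ler_normD (zl - z n + n.+1%:R^-1 *: (u - z n)) (S (z n) - S zl).
    have h2 := ler_normD (zl - z n) (n.+1%:R^-1 *: (u - z n)).
    have h3 := S_ne (path_in n) browder_limit_in; rewrite -/zl (distrC (z n)) in h3.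
    have h4 : `|n.+1%:R^-1 *: (u - z n)| <= `|u - p0| * n.+1%:R^-1.
      rewrite normrZ ger0_norm ?invr_ge0 ?ler0n // mulrC ler_wpM2r ?invr_ge0 ?ler0n //.
      exact: path_bounded.
    by move: h1 h2 h3 h4; set a := n.+1%:R^-1; lra.
  apply: limsup_nonposD; apply: limsup_nonposZ => //.
  - exact: browder_limit_dist.
  - exact: limsup_nonpos_inv.
by move/limsup_nonpos_const; rewrite normr_le0 subr_eq0 => /eqP.
Qed.

Lemma browder_limit_variational q : D q -> S q = q ->
  0 <= <<u - browder_limit, browder_limit - q>>.
Proof.
move=> Dq Sq; set zl := browder_limit.
have K0 : 0 <= `|q - zl| + `|u - p0| by rewrite addr_ge0.
have : limsup_nonpos (fun=> <<u - zl, q - zl>>).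
  apply: (limsup_nonpos_le _ (limsup_nonposZ K0 browder_limit_dist)) => n.
  have := inner_shift ip u q zl (z n); have := path_variational n Dq Sq.
  rewrite -(opprB (z n) q) (innerNr ip).
  have := path_bounded n Dp0 Sp0; have := normr_ge0 (zl - z n); nra.
by move/limsup_nonpos_const; rewrite -(opprB zl q) (innerNr ip) oppr_le0.
Qed.

(* Testing monotonicity of I - S at z_n against y. *)
Lemma path_inner_residual n y : D y ->
  <<u - z n, y - z n>> <= n.+1%:R * (`|y - S y| * `|z n - y|).
Proof.
move=> Dy; have := nonexpansive_monotone (path_in n) Dy.
rewrite path_residual (innerDl ip) (innerNl ip) (innerZl ip) -(opprB (z n) y) (innerNr ip).
have cs := cauchy_schwarz ip (- (y - S y)) (z n - y); rewrite (innerNl ip) normrN in cs.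
by rewrite -ler_pdivrMl ?ltr0n // mulrC; set a := n.+1%:R^-1; lra.
Qed.

Lemma browder_limsup (y : nat -> V) (B : R) :
  (forall k, D (y k)) -> (forall k, `|u - y k| <= B) ->
  limsup_nonpos (fun k => `|y k - S (y k)|) ->
  limsup_nonpos (fun k => <<u - browder_limit, y k - browder_limit>>).
Proof.
move=> Dy yB res e e0; set zl := browder_limit; have e2 : 0 < e / 2 by rewrite divr_gt0.
have B0 : 0 <= B by apply: le_trans (yB 0%N).
pose K := B + `|u - zl| + `|u - p0|.
have K0 : 0 <= K by rewrite /K !addr_ge0.
have [n /(_ n (leqnn n)) zn] := limsup_nonposZ K0 browder_limit_dist e2.
pose K' := n.+1%:R * (`|u - p0| + B).
have K'0 : 0 <= K' by rewrite mulr_ge0 ?addr_ge0.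
have [N HN] := limsup_nonposZ K'0 res e2.
exists N => k /HN yk.
have shift := inner_shift ip u (y k) zl (z n).
have resid := path_inner_residual n (Dy k).
have uzn := path_bounded n Dp0 Sp0.
have yzl : `|y k - zl| <= B + `|u - zl|.
  have -> : y k - zl = (y k - u) + (u - zl) by rewrite addrA subrK.
  by apply: le_trans (ler_normD _ _) _; rewrite distrC lerD.
have zny : `|z n - y k| <= `|u - p0| + B.
  have -> : z n - y k = (z n - u) + (u - y k) by rewrite addrA subrK.
  by apply: le_trans (ler_normD _ _) _; rewrite distrC lerD.
have r0 := normr_ge0 (y k - S (y k)); have d0 := normr_ge0 (zl - z n).
have : n.+1%:R * (`|y k - S (y k)| * `|z n - y k|) <= K' * `|y k - S (y k)|.
  by rewrite /K' -mulrA ler_pM2l ?ltr0n // mulrC ler_wpM2r.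
have : `|zl - z n| * (`|y k - zl| + `|u - z n|) <= K * `|zl - z n|.
  by rewrite mulrC ler_wpM2r // /K; lra.
lra.
Qed.
End BrowderPath.

Section HalpernIteration.
Variable p0 : V.
Hypotheses (Dp0 : D p0) (Sp0 : S p0 = p0).
Variables (lam : nat -> R) (x : nat -> V).
Hypothesis lam_steering : steering lam.
Hypothesis Dx0 : D (x 0%N).
Hypothesis x_rec : forall k, x k.+1 = lam k *: u + (1 - lam k) *: S (x k).

Lemma lam01 k : 0 <= lam k <= 1.
Proof. by case: lam_steering. Qed.

Lemma halpern_in k : D (x k).
Proof.
by elim: k => [//|k IH]; rewrite x_rec; apply: convexD => //; [exact: S_in | exact: lam01].
Qed.

Lemma halpern_sub q k :
  x k.+1 - q = lam k *: (u - q) + (1 - lam k) *: (S (x k) - q).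
Proof. by rewrite x_rec affine_combB. Qed.

Definition halpern_bound : R := `|u - p0| + `|x 0%N - p0|.

Lemma halpern_bound_ge0 : 0 <= halpern_bound.
Proof. by rewrite addr_ge0. Qed.

Lemma halpern_bounded k : `|x k - p0| <= halpern_bound.
Proof.
rewrite /halpern_bound; elim: k => [|k IH]; first by rewrite lerDr.
rewrite halpern_sub; apply: le_trans (ler_normD _ _) _.
have [l0 l1] := andP (lam01 k); rewrite !normrZ !ger0_norm //; last lra.
have Sx : `|S (x k) - p0| <= `|u - p0| + `|x 0%N - p0|.
  by rewrite -{1}Sp0; apply: (le_trans _ IH); apply: S_ne => //; exact: halpern_in.
have := ler_wpM2l (_ : 0 <= 1 - lam k) Sx; have := mulr_ge0 l0 (normr_ge0 (x 0%N - p0)).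
lra.
Qed.

Lemma halpern_bounded_u k : `|u - x k| <= 2 * halpern_bound.
Proof.
have -> : u - x k = (u - p0) + (p0 - x k) by rewrite addrA subrK.
apply: le_trans (ler_normD _ _) _; rewrite (distrC p0).
by have := halpern_bounded k; have := normr_ge0 (x 0%N - p0); rewrite /halpern_bound; lra.
Qed.

Lemma halpern_bounded_uS k : `|u - S (x k)| <= 2 * halpern_bound.
Proof.
have -> : u - S (x k) = (u - p0) + (p0 - S (x k)) by rewrite addrA subrK.
apply: le_trans (ler_normD _ _) _; rewrite (distrC p0).
have := S_ne (halpern_in k) Dp0; rewrite Sp0 => h.
by have := halpern_bounded k; have := normr_ge0 (x 0%N - p0); rewrite /halpern_bound; lra.
Qed.

Lemma halpern_increment k : `|x k.+2 - x k.+1| <=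
  (1 - lam k.+1) * `|x k.+1 - x k| + (2 * halpern_bound) * `|lam k.+1 - lam k|.
Proof.
rewrite (x_rec k.+1) {2}(x_rec k) affine_comb_diff.
apply: le_trans (ler_normD _ _) _; rewrite !normrZ addrC lerD //.
  have [l0 l1] := andP (lam01 k.+1); rewrite ger0_norm; last lra.
  by apply: ler_wpM2l; [lra | exact: S_ne (halpern_in _) (halpern_in _)].
by rewrite mulrC ler_wpM2r ?halpern_bounded_uS.
Qed.

Lemma halpern_asymptotically_regular : limsup_nonpos (fun k => `|x k.+1 - x k|).
Proof.
have [_ _ lam_div lam_var] := lam_steering.
apply: (@xu_lemma _ _ (fun=> 0) (fun k => 2 * halpern_bound * `|lam k.+1 - lam k|)
  (fun k => lam k.+1)) => [k | k | k | k | e e0 | |].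
- exact: normr_ge0.
- exact: lam01.
- by rewrite !mulr_ge0 ?halpern_bound_ge0.
- by rewrite mulr0 addr0; exact: halpern_increment.
- by exists 0%N => k _; exact: ltW.
- have -> : (fun k => 2 * halpern_bound * `|lam k.+1 - lam k|) =
      (2 * halpern_bound) *: (fun k => `|lam k.+1 - lam k|) by rewrite scalrfctE.
  exact: is_cvg_seriesZ.
- exact: series_shift_pinfty.
Qed.

(* The residuals |x_k - S x_k| vanish, since x_(k+1) - S x_k = l_k (u - S x_k). *)
Lemma halpern_residual : limsup_nonpos (fun k => `|x k - S (x k)|).
Proof.
have [_ lam0 _ _] := lam_steering.
apply: (limsup_nonpos_le (g := fun k => `|x k.+1 - x k| + (2 * halpern_bound) * lam k)).
  move=> k; have step : x k.+1 - S (x k) = lam k *: (u - S (x k)).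
    by rewrite halpern_sub subrr scaler0 addr0.
  have -> : x k - S (x k) = (x k - x k.+1) + lam k *: (u - S (x k)).
    by rewrite -step addrA subrK.
  apply: le_trans (ler_normD _ _) _; rewrite distrC lerD // normrZ.
  have [l0 _] := andP (lam01 k); rewrite ger0_norm // mulrC ler_wpM2r //.
  exact: halpern_bounded_uS.
apply: limsup_nonposD; first exact: halpern_asymptotically_regular.
by apply: limsup_nonposZ; [rewrite mulr_ge0 ?halpern_bound_ge0 | exact: cvg0_limsup_nonpos].
Qed.

Lemma halpern_dist_rec q k : D q -> S q = q ->
  `|x k.+1 - q| ^+ 2 <=
    (1 - lam k) * `|x k - q| ^+ 2 + lam k * (2 * <<u - q, x k.+1 - q>>).
Proof.
move=> Dq Sq; have [l0 l1] := andP (lam01 k); have l1' : 0 <= 1 - lam k by lra.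
have Sx : `|(1 - lam k) *: (S (x k) - q)| <= (1 - lam k) * `|x k - q|.
  rewrite normrZ ger0_norm // ler_wpM2l // -{1}Sq.
  exact: S_ne (halpern_in k) Dq.
have Sx2 : `|(1 - lam k) *: (S (x k) - q)| ^+ 2 <= (1 - lam k) * `|x k - q| ^+ 2.
  apply: le_trans (_ : ((1 - lam k) * `|x k - q|) ^+ 2 <= _).
    by rewrite ler_sqr ?nnegrE ?mulr_ge0.
  by rewrite exprMn ler_wpM2r // expr2; nra.
have := normD_sq_le ip ((1 - lam k) *: (S (x k) - q)) (lam k *: (u - q)).
rewrite addrC -halpern_sub (innerZl ip); lra.
Qed.

Lemma halpern_cvg_fixed q : D q -> S q = q ->
  limsup_nonpos (fun k => <<u - q, x k - q>>) -> x @ \oo --> q.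
Proof.
move=> Dq Sq hq; have [_ _ lam_div _] := lam_steering.
apply/cvg_limsup_dist/limsup_nonpos_sqr => [k|]; first exact: normr_ge0.
apply: (@xu_lemma _ _ (fun k => 2 * <<u - q, x k.+1 - q>>) (fun=> 0) lam)
  => [k | k | k | k | | |].
- exact: sqr_ge0.
- exact: lam01.
- by [].
- by rewrite addr0 !(distrC q); exact: halpern_dist_rec.
- apply: (limsup_nonposZ (f := fun k => <<u - q, x k.+1 - q>>)) => //.
  exact: (limsup_nonposS hq).
- have -> : series (fun=> 0 : R) = fun=> 0.
    by apply/funext => n; rewrite /series /= big1.
  exact: is_cvg_cst.
- exact: lam_div.
Qed.
End HalpernIteration.

Theorem halpern_convergence (p0 : V) (lam : nat -> R) (x : nat -> V) :
  D p0 -> S p0 = p0 -> steering lam -> D (x 0%N) ->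
  (forall k, x k.+1 = lam k *: u + (1 - lam k) *: S (x k)) ->
  exists z, [/\ D z, S z = z,
    (forall q, D q -> S q = q -> 0 <= <<u - z, z - q>>) & x @ \oo --> z].
Proof.
move=> Dp0 Sp0 steer Dx0 x_rec.
have path_pts n : exists zn,
    D zn /\ zn = path_param n *: u + (1 - path_param n) *: S zn.
  by have [zn Dzn zn_fix] := browder_point (path_param01 n); exists zn.
have [z z_path] := choice path_pts.
exists (browder_limit z).
have Dz := browder_limit_in Dp0 Sp0 z_path.
have Sz := browder_limit_fixed Dp0 Sp0 z_path.
split=> // [q | ]; first exact: (browder_limit_variational Dp0 Sp0 z_path).
apply: (halpern_cvg_fixed steer Dx0 x_rec Dz Sz).
apply: (browder_limsup Dp0 Sp0 z_path (halpern_in steer Dx0 x_rec)).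
- exact: (halpern_bounded_u Dp0 Sp0 steer Dx0 x_rec).
- exact: (halpern_residual Dp0 Sp0 steer Dx0 x_rec).
Qed.
End Halpern.

Theorem theorem2 (R : realType) (V : completeNormedModType R)
  (inner : V -> V -> R) (D : set V) (m : nat) (T : 'I_m -> V -> V)
  (Omega : seq (seq 'I_m)) (w : seq 'I_m -> R) (lam : nat -> R)
  (u x0 : V) (x : nat -> V) :
  is_inner_product inner ->
  D !=set0 -> closed D -> convex_subset D ->
  (forall i y, D y -> D (T i y)) ->
  (forall i, firmly_nonexpansive inner D (T i)) ->
  (\bigcap_(i in [set: 'I_m]) Fix D (T i)) !=set0 ->
  in_M Omega w ->
  steering lam ->
  D u -> D x0 ->
  x 0%N = x0 ->
  (forall k, x k.+1 = lam k *: u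
                      + (1 - lam k) *: \sum_(t <- Omega) w t *: string_op T t (x k)) ->
  (exists p, metric_proj (\bigcap_(i in [set: 'I_m]) Fix D (T i)) u p) /\
  (forall p, metric_proj (\bigcap_(i in [set: 'I_m]) Fix D (T i)) u p ->
     x @ \oo --> p).
Proof.
move=> ip _ closedD convexD T_in T_fne [p0 Fp0] Omega_w steer Du Dx0 x0E x_rec.
set F := \bigcap_(i in [set: 'I_m]) Fix D (T i).
pose S := averaged_op T Omega w.
have FE y : F y <-> D y /\ S y = y := averaged_fixE ip T_in T_fne Omega_w y Fp0.
have [Dp0 Sp0] := (FE p0).1 Fp0.
have Dx : D (x 0%N) by rewrite x0E.
have [z [Dz Sz var x_cvg]] := halpern_convergence (S := S) ip convexD closedD
  (averaged_in convexD T_in Omega_w) (averaged_nonexpansive ip T_in T_fne Omega_w)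
  Du Dp0 Sp0 steer Dx x_rec.
have Fz : F z by apply/FE.
have var_F q : F q -> 0 <= inner (u - z) (z - q) by move=> /FE [Dq Sq]; exact: var.
have [proj_z proj_unique] := variational_metric_proj ip Fz var_F.
by split=> [|p /proj_unique ->]; first exists z.
Qed.
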